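(* Let $a$ be a positive integer, let $G$ be a finite simple graph of arboricity at most $a$ containing no isolated edges, and let $p_1<p_2<\cdots<p_a$ be the first $a$ prime numbers larger than $3$. Then ${\chi^\Sigma_g}^\star(G)\leq p_1p_2\cdots p_a$.
   Context: The arboricity of $G$ is the least number of forests into which $E(G)$ can be decomposed; an isolated edge is a connected component isomorphic to $K_2$. For an Abelian group $\mathcal{G}$ with identity $0$ and $f\colon E(G)\to\mathcal{G}$, $w_f(v)=\sum_{u\in N(v)}f(uv)$. ${\chi^\Sigma_g}^\star(G)$ is the least positive integer $k$ such that for every Abelian group $\mathcal{G}$ of order $k$ there exists $f\colon E(G)\to\mathcal{G}\setminus\{0\}$ with $w_f(u)\neq w_f(v)$ for every edge $uv$. *)

From HB Require Import structures.
From mathcomp Require Import all_boot all_order all_algebra.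
Set Implicit Arguments. Unset Strict Implicit. Unset Printing Implicit Defensive.
Import GRing.Theory.
Local Open Scope ring_scope.

Definition simple_graph (T : finType) (e : rel T) : Prop :=
  symmetric e /\ irreflexive e.

(* Edges are identified with 2-element vertex sets [set u; v]. *)

Definition is_forest (T : finType) (r : rel T) : Prop :=
  forall s : seq T, uniq s -> (3 <= size s)%N -> ~~ cycle r s.

Definition arboricity_le (T : finType) (e : rel T) (a : nat) : Prop :=
  exists c : {set T} -> 'I_a,
    forall i : 'I_a, is_forest [rel u v | e u v && (c [set u; v] == i)].

Definition no_isolated_edge (T : finType) (e : rel T) : Prop :=
  forall u v, e u v -> exists w, [/\ w != u, w != v & e u w || e v w].

Definition wsum (T : finType) (e : rel T) (Z : zmodType) (f : {set T} -> Z)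
  (v : T) : Z := \sum_(u | e v u) f [set u; v].

Definition group_sum_good (T : finType) (e : rel T) (k : nat) : Prop :=
  forall Z : finZmodType, #|Z| = k ->
    exists f : {set T} -> Z,
      (forall u v, e u v -> f [set u; v] != 0) /\
      (forall u v, e u v -> wsum e f u != wsum e f v).

Definition first_primes_gt3 (a : nat) (ps : seq nat) : Prop :=
  [/\ size ps = a, sorted ltn ps,
      all (fun p => prime p && (3 < p)%N) ps &
      forall q, prime q -> (3 < q)%N -> (q <= last 0%N ps)%N -> q \in ps].

From HB Require Import structures.
From mathcomp Require Import all_boot all_order all_algebra.
From mathcomp Require fingroup pgroup cyclic.

(* Split E(G) into forests F_1, ..., F_a and attach the prime p_i to F_i.
   Inside G, each F_i extends to a forest H_i without isolated edges, and such
   a forest has a nowhere-zero F_{p_i}-labelling with proper vertex sums: prune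
   the leaves hanging at a vertex u with at most one non-leaf neighbour, label
   the rest by induction, and choose the labels of the pruned leaves so as to
   avoid at most three forbidden values (this is where p_i > 3 is used).
   In an abelian group of order p_1 ... p_a choose x_i of order p_i and label
   an edge by sum_i x_i c_i(edge): since sum_i x_i m_i = sum_i x_i n_i forces
   m_i = n_i mod p_i, every constraint can be checked in the colour class of
   the edge. *)

Set Implicit Arguments.
Unset Strict Implicit.
Unset Printing Implicit Defensive.

Import GRing.Theory.
Local Open Scope ring_scope.

Lemma eqn_modMr_coprime d k m n : coprime d k ->
  (m * k == n * k %[mod d])%N = (m == n %[mod d])%N.
Proof.
move=> cdk; wlog le_mn : m n / (m <= n)%N.
  by move=> W; case: (leqP m n) => [/W//|/ltnW/W]; rewrite eq_sym => ->; rewrite eq_sym.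
rewrite eq_sym [RHS]eq_sym !eqn_mod_dvd ?leq_mul2r ?le_mn ?orbT //.
by rewrite -mulnBl Gauss_dvdl.
Qed.

Section AdditiveOrder.
Import fingroup pgroup cyclic.

Lemma exists_add_order (Z : finZmodType) p : prime p -> (p %| #|Z|)%N ->
  exists x : Z, forall k, (x *+ k == 0) = (p %| k)%N.
Proof.
move=> p_pr p_dvd; have [|x _ ox] := @Cauchy _ p [set: Z] p_pr; first by rewrite cardsT.
by exists x => k; rewrite -ox order_dvdn.
Qed.

End AdditiveOrder.

Section IndependentOrders.
Variables (Z : zmodType) (a : nat) (P : 'I_a -> nat) (X : 'I_a -> Z).
Hypothesis orderX : forall i k, (X i *+ k == 0) = (P i %| k)%N.
Hypothesis coprimeP : forall i j, i != j -> coprime (P i) (P j).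

Lemma eq_mulrn_mod i m n : (X i *+ m == X i *+ n) = (m == n %[mod P i])%N.
Proof.
wlog le_mn : m n / (m <= n)%N.
  by move=> W; case: (leqP m n) => [/W//|/ltnW/W]; rewrite eq_sym => ->; rewrite eq_sym.
by rewrite [RHS]eq_sym eqn_mod_dvd // -orderX mulrnBr // subr_eq0 eq_sym.
Qed.

Lemma sum_mulrn_inj_mod (m n : 'I_a -> nat) :
  \sum_i X i *+ m i = \sum_i X i *+ n i -> forall j, (m j = n j %[mod P j])%N.
Proof.
move=> eq_mn j; pose K := (\prod_(i | i != j) P i)%N.
(* multiplying by K kills every summand but the j-th *)
have sumK q : (\sum_i X i *+ q i) *+ K = X j *+ (q j * K).
  rewrite -sumrMnl (bigD1 j) //= big1 ?addr0 ?mulrnA // => i ij.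
  by apply/eqP; rewrite -mulrnA orderX dvdn_mull // /K (bigD1 i) //= dvdn_mulr.
have cK : coprime (P j) K.
  apply: (big_ind (coprime (P j))) => [|u v cu cv|i ij]; first exact: coprimen1.
    by rewrite coprimeMr cu cv.
  by apply: coprimeP; rewrite eq_sym.
have /eqP := congr1 (fun z => z *+ K) eq_mn.
by rewrite /= !sumK eq_mulrn_mod eqn_modMr_coprime // => /eqP.
Qed.

End IndependentOrders.

Section Graphs.
Variable T : finType.

Lemma set2_inj (a b c d : T) :
  [set a; b] = [set c; d] -> (a = c /\ b = d) \/ (a = d /\ b = c).
Proof.
move=> eq_ab.
have : [&& a \in [set c; d], b \in [set c; d], c \in [set a; b] & d \in [set a; b]].
  by rewrite eq_ab !set21 !set22 -eq_ab !set21 set22.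
rewrite !inE => /and4P[/orP[]/eqP-> /orP[]/eqP-> c_ab d_ab].
- by move: d_ab; rewrite orbb => /eqP->; left.
- by left.
- by right.
- by move: c_ab; rewrite orbb => /eqP->; right.
Qed.

Lemma cycle_two_neighbours (r : rel T) s x :
    uniq s -> (3 <= size s)%N -> cycle r s -> x \in s ->
  exists y z, [/\ y \in s, z \in s, y != z, r x y & r z x].
Proof.
move=> + + + /rot_to[i t rot_s].
rewrite -(rot_uniq i) -(size_rot i) -(rot_cycle i) rot_s.
have mem_s z : z \in x :: t -> z \in s by rewrite -rot_s mem_rot.
case: t rot_s mem_s => [|t0 [|t1 t']] //= _ mem_s /andP[_ /andP[t0_t _]] _.
rewrite rcons_path => /and3P[x_t0 _ /andP[_ last_x]].
exists t0, (last t1 t'); split=> //.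
- by apply: mem_s; rewrite !inE eqxx orbT.
- by apply/mem_s/mem_behead/mem_behead/mem_last.
- by apply: contraNneq t0_t => ->; rewrite mem_last.
Qed.

Definition arcs (R : rel T) := [set p : T * T | R p.1 p.2].

Variable H : rel T.

Definition upath x s := uniq (x :: s) && path H x s.

Definition leaves_at u := [set z | H u z && [forall y, H z y ==> (y == u)]].

Definition inner_nbrs u := [set z | H u z && (z \notin leaves_at u)].

Lemma in_inner_nbrs u z : (z \in inner_nbrs u) = H u z && (z \notin leaves_at u).
Proof. by rewrite inE. Qed.

Lemma leaves_at_adj u z : z \in leaves_at u -> H u z.
Proof. by rewrite inE => /andP[]. Qed.

Lemma leaves_at_nbr u z y : z \in leaves_at u -> H z y -> y = u.
Proof. by rewrite inE => /andP[_ /forallP/(_ y)/implyP z_nbr] /z_nbr/eqP. Qed.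

Lemma mem_leaves_at u z : H u z -> (forall y, H z y -> y = u) -> z \in leaves_at u.
Proof.
by move=> uz z_nbr; rewrite inE uz; apply/forallP => y; apply/implyP => /z_nbr->.
Qed.

Lemma notin_leaves_at u z :
  H u z -> z \notin leaves_at u -> exists2 y, H z y & y != u.
Proof.
move=> uz; rewrite inE uz negb_forall => /existsP[y].
by rewrite negb_imply => /andP[zy y_u]; exists y.
Qed.

Section Forests.
Hypothesis forestH : is_forest H.

Lemma forest_subrel (F : rel T) : subrel F H -> is_forest F.
Proof.
by move=> sFH s uniq_s size_s; apply: contra (forestH uniq_s size_s); apply: sub_cycle.
Qed.

Lemma forest_no_chord x y s z :
  uniq [:: x, y & s] -> path H x (y :: s) -> z \in s -> ~~ H z x.
Proof.
move=> + + z_s; case/splitPr: z_s => s1 s2.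
rewrite -cat_rcons -!cat_cons cat_uniq cat_path => /andP[uniq_cyc _] /andP[path_cyc _].
apply/negP => z_x; apply: (negP (forestH uniq_cyc _)); first by rewrite /= size_rcons.
by rewrite /= rcons_path last_rcons z_x andbT.
Qed.

Hypotheses (symH : symmetric H) (irrH : irreflexive H).

Section LongestPath.
Variables (x x1 : T) (s : seq T).
Hypothesis upath_x : upath x (x1 :: s).
Hypothesis longest : forall y t, upath y t -> (size t <= (size s).+1)%N.

Lemma longest_upath_leaf y : H x y -> y = x1.
Proof.
move=> xy; apply/eqP/contraT => y_x1; move: upath_x => /andP[uniq_x path_x].
have [y_s | y_notin] := boolP (y \in x1 :: s).
  rewrite inE (negbTE y_x1) /= in y_s.
  by have := forest_no_chord uniq_x path_x y_s; rewrite symH xy.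
have /longest : upath y [:: x, x1 & s].
  apply/andP; split; last by rewrite /= symH xy.
  rewrite cons_uniq uniq_x andbT inE negb_or y_notin andbT.
  by apply: contraTneq xy => ->; rewrite irrH.
by rewrite /= ltnn.
Qed.

Lemma longest_upath_next z y : H x1 z -> H z y -> y != x1 -> ohead s = Some z.
Proof.
move=> x1z zy y_x1; move: upath_x => /andP[uniq_x path_x].
have z_x1 : z != x1 by apply: contraTneq x1z => ->; rewrite irrH.
have [z_s | z_s] := boolP (z \in s).
  case s_eq: s z_s uniq_x path_x => [//|z0 s'] /=; rewrite inE.
  case/predU1P=> [-> // | z_s'] /andP[_ uniq_x1] /andP[_ path_x1].
  by have := forest_no_chord uniq_x1 path_x1 z_s'; rewrite symH x1z.
have uniq_z : uniq [:: z, x1 & s].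
  by move: uniq_x => /= /and3P[_ -> ->]; rewrite inE negb_or z_x1 z_s.
have path_z : path H z (x1 :: s).
  by move: path_x => /= /andP[_ ->]; rewrite symH x1z.
have [y_s | y_s] := boolP (y \in s).
  by have := forest_no_chord uniq_z path_z y_s; rewrite symH zy.
have y_z : y != z by apply: contraTneq zy => ->; rewrite irrH.
have /longest : upath y [:: z, x1 & s].
  apply/andP; split.
    by rewrite cons_uniq uniq_z !inE !negb_or y_z y_x1 y_s.
  by rewrite -[path H y _]/(H y z && path H z (x1 :: s)) path_z andbT symH.
by rewrite /= ltnn.
Qed.

End LongestPath.

Lemma exists_longest_upath u v : H u v -> exists x x1 s,
  upath x (x1 :: s) /\ forall y t, upath y t -> (size t <= (size s).+1)%N.
Proof.
move=> uv; pose has_upath n := [exists x, exists t : n.-tuple T, upath x t].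
have has_upath_le n : has_upath n -> (n <= #|T|)%N.
  case/existsP=> x /existsP[t /andP[uniq_t _]].
  have := max_card (mem (x :: t)).
  by rewrite (card_uniqP uniq_t) /= size_tuple => /ltnW.
have has_upath1 : has_upath 1.
  apply/existsP; exists u; apply/existsP; exists [tuple v].
  by rewrite /upath /= uv inE !andbT; apply: contraTneq uv => ->; rewrite irrH.
case: (ex_maxnP (ex_intro _ 1 has_upath1) has_upath_le) => n.
case/existsP=> x /existsP[[t /= /eqP <-{n}] upath_x] longest.
case: t upath_x longest => [|x1 s] upath_x longest.
  by have := longest 1 has_upath1.
exists x, x1, s; split=> // y t upath_y.
by apply: longest; apply/existsP; exists y; apply/existsP; exists (in_tuple t).
Qed.

Lemma forest_leafy_vertex u v :
  H u v -> exists w, leaves_at w != set0 /\ (#|inner_nbrs w| <= 1)%N.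
Proof.
case/exists_longest_upath=> x [x1 [s [upath_x longest]]]; exists x1; split.
  apply/set0Pn; exists x; apply: mem_leaves_at.
    by move: upath_x => /andP[_ /= /andP[]]; rewrite symH.
  exact: (longest_upath_leaf upath_x longest).
apply/card_le1_eqP => z1 z2; rewrite !in_inner_nbrs.
move=> /andP[x1z1 z1_inner] /andP[x1z2 z2_inner].
have [y1 z1y1 y1_x1] := notin_leaves_at x1z1 z1_inner.
have [y2 z2y2 y2_x1] := notin_leaves_at x1z2 z2_inner.
have := longest_upath_next upath_x longest x1z1 z1y1 y1_x1.
by rewrite (longest_upath_next upath_x longest x1z2 z2y2 y2_x1) => -[].
Qed.

End Forests.

End Graphs.

Definition nz_sum_distinguishing (T : finType) (Z : zmodType) (H : rel T)
    (f : {set T} -> Z) :=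
  (forall x y, H x y -> f [set x; y] != 0) /\
  (forall x y, H x y -> wsum H f x != wsum H f y).

Section Pruning.
Variables (T : finType) (H : rel T).
Hypotheses (symH : symmetric H) (irrH : irreflexive H).
Variable u : T.
Local Notation L := (leaves_at H u).

Definition prune_leaves x y := [&& H x y, x \notin L & y \notin L].

Lemma centre_notin_leaves : u \notin L.
Proof. by apply/negP => /leaves_at_adj; rewrite irrH. Qed.

Lemma nbr_notin_leaves x y : H x y -> x != u -> y \notin L.
Proof.
by move=> xy; apply: contraNN => /leaves_at_nbr y_nbr; apply/eqP/y_nbr; rewrite symH.
Qed.

Lemma prune_leaves_sym : symmetric prune_leaves.
Proof. by move=> x y; rewrite /prune_leaves symH [(y \notin L) && _]andbC. Qed.

Lemma prune_leaves_subrel : subrel prune_leaves H.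
Proof. by move=> x y /andP[]. Qed.

Lemma prune_leaves_centre y : prune_leaves u y = (y \in inner_nbrs H u).
Proof. by rewrite in_inner_nbrs /prune_leaves centre_notin_leaves. Qed.

Lemma prune_leaves_no_isolated_edge :
  no_isolated_edge H -> no_isolated_edge prune_leaves.
Proof.
move=> noisoH x y /and3P[xy x_L y_L].
wlog y_u : x y xy x_L y_L / y != u.
  move=> W; have [y_eq | ] := eqVneq y u; last exact: W.
  have x_u : x != u by rewrite -y_eq; apply: contraTneq xy => ->; rewrite irrH.
  have yx : H y x by rewrite symH.
  have [w [w_y w_x yw_xw]] := W y x yx y_L x_L x_u.
  by exists w; split; rewrite // orbC.
have w_notin w : H y w -> w \notin L by move/nbr_notin_leaves; apply.
have [x_eq | x_u] := eqVneq x u.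
  rewrite x_eq in xy *; have [w yw w_u] := notin_leaves_at xy y_L.
  exists w; split=> //; first by apply: contraTneq yw => ->; rewrite irrH.
  by rewrite /prune_leaves yw y_L (w_notin w yw) orbT.
have [w [w_x w_y /orP[xw | yw]]] := noisoH x y xy; exists w; split=> //.
  by rewrite /prune_leaves xw x_L (nbr_notin_leaves xw).
by rewrite /prune_leaves yw y_L (w_notin w yw) orbT.
Qed.

Lemma card_arcs_prune_leaves : L != set0 -> (#|arcs prune_leaves| < #|arcs H|)%N.
Proof.
case/set0Pn=> v v_L; apply: proper_card; apply/properP; split.
  by apply/subsetP => -[x y]; rewrite !inE => /prune_leaves_subrel.
exists (u, v); first by rewrite inE (leaves_at_adj v_L).
by rewrite inE /= /prune_leaves v_L !andbF.
Qed.

Lemma leaves_at_card_gt1 :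
  no_isolated_edge H -> inner_nbrs H u = set0 -> L != set0 -> (1 < #|L|)%N.
Proof.
move=> noisoH no_inner /set0Pn[v v_L]; apply/card_gt1P.
have [x [x_u x_v /orP[ux | vx]]] := noisoH u v (leaves_at_adj v_L).
  exists v, x; split; rewrite 1?eq_sym //; apply: contraT => x_L.
  by have := in_inner_nbrs H u x; rewrite no_inner inE ux x_L.
by move: x_u; rewrite (leaves_at_nbr v_L vx) eqxx.
Qed.

Lemma edge_leaves_cases x y : H x y ->
  [\/ x \in L /\ y = u, y \in L /\ x = u | prune_leaves x y].
Proof.
move=> xy; have [x_L | x_L] := boolP (x \in L).
  by constructor 1; rewrite (leaves_at_nbr x_L xy).
have [y_L | y_L] := boolP (y \in L).
  by constructor 2; split=> //; apply: (leaves_at_nbr y_L); rewrite symH.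
by constructor 3; rewrite /prune_leaves xy x_L y_L.
Qed.

Variables (Z : zmodType) (c : {set T} -> Z) (lab : T -> Z).

Definition extend_leaves S :=
  if [pick z in L | S == [set z; u]] is Some z then lab z else c S.

Lemma extend_leaves_leaf z : z \in L -> extend_leaves [set z; u] = lab z.
Proof.
move=> z_L; rewrite /extend_leaves; case: pickP => [z' /andP[z'_L /eqP] | /(_ z)].
  case/set2_inj=> [[->] // | [z_u _]].
  by move: z_L; rewrite z_u (negbTE centre_notin_leaves).
by rewrite z_L eqxx.
Qed.

Lemma extend_leaves_pruned x y :
  x \notin L -> y \notin L -> extend_leaves [set x; y] = c [set x; y].
Proof.
move=> x_L y_L; rewrite /extend_leaves; case: pickP => [z /andP[z_L /eqP] | //].
case/set2_inj=> [[x_z _] | [_ y_z]]; first by rewrite x_z z_L in x_L.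
by rewrite y_z z_L in y_L.
Qed.

Lemma wsum_extend_leaves_leaf z : z \in L -> wsum H extend_leaves z = lab z.
Proof.
move=> z_L; rewrite /wsum (eq_bigl (pred1 u)) => [|y /=].
  by rewrite big_pred1_eq setUC extend_leaves_leaf.
by apply/idP/eqP => [/(leaves_at_nbr z_L) | ->]; rewrite // symH leaves_at_adj.
Qed.

Lemma wsum_extend_leaves_pruned x :
  x \notin L -> x != u -> wsum H extend_leaves x = wsum prune_leaves c x.
Proof.
move=> x_L x_u; rewrite /wsum /prune_leaves x_L.
apply: eq_big => [y | y xy].
  by case xy: (H x y); rewrite //= (nbr_notin_leaves xy).
by rewrite extend_leaves_pruned ?(nbr_notin_leaves xy).
Qed.

Lemma wsum_extend_leaves_centre :
  wsum H extend_leaves u = \sum_(z in L) lab z + wsum prune_leaves c u.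
Proof.
rewrite /wsum (bigID (mem L)) /=; congr (_ + _).
  apply: eq_big => [y | y /andP[_ y_L]]; last by rewrite extend_leaves_leaf.
  by rewrite andbC; have [/leaves_at_adj -> | ] := boolP (y \in L).
apply: eq_big => [y | y /andP[_ y_L]].
  by rewrite /prune_leaves centre_notin_leaves andbC.
by rewrite extend_leaves_pruned ?centre_notin_leaves.
Qed.

Lemma extend_leaves_nz_sum_distinguishing :
  let centre_sum := \sum_(z in L) lab z + wsum prune_leaves c u in
  nz_sum_distinguishing prune_leaves c ->
  (forall z, z \in L -> lab z != 0) ->
  (forall z, z \in L -> lab z != centre_sum) ->
  (forall y, y \in inner_nbrs H u -> centre_sum != wsum prune_leaves c y) ->
  nz_sum_distinguishing H extend_leaves.
Proof.
move=> centre_sum [c_nz c_dist] lab_nz lab_centre centre_inner; split=> x y.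
  case/edge_leaves_cases=> [[x_L ->] | [y_L ->] | xy].
  - by rewrite extend_leaves_leaf ?lab_nz.
  - by rewrite setUC extend_leaves_leaf ?lab_nz.
  - by case/and3P: (xy) => _ x_L y_L; rewrite extend_leaves_pruned ?c_nz.
case/edge_leaves_cases=> [[x_L ->] | [y_L ->] | xy].
- by rewrite wsum_extend_leaves_leaf // wsum_extend_leaves_centre lab_centre.
- by rewrite (wsum_extend_leaves_leaf y_L) wsum_extend_leaves_centre eq_sym lab_centre.
have nbr_u z : prune_leaves u z -> z != u.
  by apply: contraTneq => ->; rewrite /prune_leaves irrH.
case/and3P: (xy) => _ x_L y_L; have [x_u | x_u] := eqVneq x u.
  rewrite x_u in xy *.
  rewrite wsum_extend_leaves_centre wsum_extend_leaves_pruned ?nbr_u //.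
  by rewrite centre_inner // -prune_leaves_centre.
have [y_u | y_u] := eqVneq y u.
  rewrite y_u prune_leaves_sym in xy *.
  rewrite wsum_extend_leaves_centre wsum_extend_leaves_pruned ?nbr_u // eq_sym.
  by rewrite centre_inner // -prune_leaves_centre.
by rewrite !wsum_extend_leaves_pruned ?c_dist.
Qed.

End Pruning.

Lemma exists_notin_seq (K : finType) (s : seq K) :
  (size s < #|K|)%N -> exists t, t \notin s.
Proof.
move=> lt_s_K; suff /subsetPn[t _ t_s] : ~~ ([set: K] \subset s) by exists t.
apply: contraTN lt_s_K => /subset_leq_card; rewrite cardsT -leqNgt => /leq_trans; apply.
exact: card_size.
Qed.

Lemma linear_root (K : fieldType) (a b t : K) : b != 0 -> a * t + b = 0 -> t = - b / a.
Proof.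
move=> b_nz root_t; have a_nz : a != 0.
  by apply: contraNneq b_nz => a0; rewrite -root_t a0 mul0r add0r.
apply: (mulfI a_nz); rewrite mulrCA mulfV // mulr1.
by apply/eqP; rewrite -addr_eq0 root_t.
Qed.

Section FieldLabellings.
Variables (K : finFieldType) (T : finType) (H : rel T).
Hypotheses (symH : symmetric H) (irrH : irreflexive H).
Variables (u : T) (c : {set T} -> K).
Hypothesis c_dist : nz_sum_distinguishing (prune_leaves H u) c.
Local Notation L := (leaves_at H u).

Lemma star_nz_sum_distinguishing :
  (2 : K) != 0 -> inner_nbrs H u = set0 -> (1 < #|L|)%N ->
  exists f : {set T} -> K, nz_sum_distinguishing H f.
Proof.
move=> two_nz no_inner /card_gt1P[v [v2 [v_L v2_L v_v2]]].
have wsum_u : wsum (prune_leaves H u) c u = 0.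
  by rewrite /wsum big_pred0 // => y; rewrite (prune_leaves_centre irrH) no_inner inE.
(* All leaf labels 1 fail only when #|L| = 1 in K; then raising two of them
   to 2 works because 2 != 0. *)
pose b : K := if #|L|%:R == 1 :> K then 1 else 0.
pose lab z : K := 1 + (if z \in [set v; v2] then b else 0).
have sum_lab : \sum_(z in L) lab z = #|L|%:R + b *+ 2.
  rewrite big_split /= sumr_const -big_mkcondr /= (eq_bigl (mem [set v; v2])).
    by rewrite sumr_const cards2 v_v2.
  by move=> z /=; rewrite andb_idl // => /set2P[] ->.
have add1_eq x y : (1 + x == 1 + y :> K) = (x == y) by rewrite (inj_eq (addrI 1)).
exists (extend_leaves H u c lab); apply: extend_leaves_nz_sum_distinguishing => //.
- move=> z _; rewrite /lab; case: ifP => _; rewrite ?addr0 ?oner_neq0 // /b.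
  by case: ifP => _; rewrite ?addr0 ?oner_neq0.
- move=> z _; rewrite sum_lab wsum_u addr0 /lab /b.
  have [m1 | m1] := eqVneq (#|L|%:R : K) 1; case: ifP => _.
  + by rewrite m1 add1_eq mulr2n -[X in X != _]addr0 add1_eq eq_sym oner_neq0.
  + by rewrite m1 add1_eq eq_sym.
  + by rewrite mul0rn !addr0 eq_sym.
  + by rewrite mul0rn !addr0 eq_sym.
- by move=> y; rewrite no_inner inE.
Qed.

Lemma inner_nz_sum_distinguishing w :
  (3 < #|K|)%N -> inner_nbrs H u = [set w] ->
  exists f : {set T} -> K, nz_sum_distinguishing H f.
Proof.
move=> card_K inner_w; have [c_nz c_sum] := c_dist.
have wsum_u : wsum (prune_leaves H u) c u = c [set w; u].
  rewrite /wsum (eq_bigl (pred1 w)) ?big_pred1_eq // => y.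
  by rewrite /= (prune_leaves_centre irrH) inner_w inE.
set cw := c [set w; u]; set sw := wsum (prune_leaves H u) c w.
have uw : prune_leaves H u u w by rewrite (prune_leaves_centre irrH) inner_w set11.
have cw_nz : cw != 0 by apply: c_nz; rewrite prune_leaves_sym.
have cw_sw : cw - sw != 0 by rewrite subr_eq0 /cw -wsum_u c_sum.
(* The common leaf label t must avoid 0 and the roots of the linear
   conditions at the leaves and at w, whose constant terms are nonzero. *)
pose m : K := #|L|%:R.
have [t] := @exists_notin_seq _ [:: 0; - cw / (m - 1); - (cw - sw) / m] card_K.
rewrite !inE !negb_or => /and3P[t_nz t_r1 t_r2].
exists (extend_leaves H u c (fun=> t)).
apply: extend_leaves_nz_sum_distinguishing => //.
- move=> z _; rewrite sumr_const wsum_u; apply: contra t_r1 => /eqP t_eq.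
  apply/eqP/(linear_root cw_nz).
  by rewrite mulrBl mul1r mulr_natl addrAC -t_eq subrr.
- move=> y; rewrite inner_w => /set1P ->; rewrite sumr_const wsum_u -/sw.
  apply: contra t_r2 => /eqP t_eq; apply/eqP/(linear_root cw_sw).
  by rewrite mulr_natl addrA t_eq subrr.
Qed.

End FieldLabellings.

Theorem forest_nz_sum_distinguishing (K : finFieldType) (T : finType) (H : rel T) :
  (3 < #|K|)%N -> (2 : K) != 0 ->
  symmetric H -> irreflexive H -> is_forest H -> no_isolated_edge H ->
  exists f : {set T} -> K, nz_sum_distinguishing H f.
Proof.
move=> card_K two_nz; have [n] := ubnP #|arcs H|.
elim: n H => // n IHn H lt_arcs symH irrH forestH noisoH.
have [[x y] /= xy | no_arcs] := pickP [pred p : T * T | H p.1 p.2]; last first.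
  by exists (fun=> 0); split=> x y xy; have := no_arcs (x, y); rewrite /= xy.
have [u [leaves_u inner_u]] := forest_leafy_vertex forestH symH irrH xy.
have [c c_dist] : exists c : {set T} -> K, nz_sum_distinguishing (prune_leaves H u) c.
  apply: IHn.
  - exact: leq_trans (card_arcs_prune_leaves leaves_u) _.
  - exact: prune_leaves_sym.
  - by move=> z; rewrite /prune_leaves irrH.
  - exact: forest_subrel forestH _ (prune_leaves_subrel (u := u)).
  - exact: prune_leaves_no_isolated_edge.
move: inner_u; rewrite leq_eqVlt ltnS leqn0 cards_eq0.
case/orP=> [/cards1P[w inner_w] | /eqP no_inner].
  exact: (inner_nz_sum_distinguishing symH irrH c_dist card_K inner_w).
apply: (star_nz_sum_distinguishing symH irrH c_dist two_nz no_inner).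
exact: (leaves_at_card_gt1 noisoH no_inner leaves_u).
Qed.

Section AddEdge.
Variables (T : finType) (H : rel T) (a w : T).

Definition add_edge x y := [|| H x y, (x == a) && (y == w) | (x == w) && (y == a)].

Lemma add_edge_sym : symmetric H -> symmetric add_edge.
Proof.
move=> symH x y; rewrite /add_edge symH; congr (_ || _).
by rewrite orbC [(x == w) && _]andbC [(x == a) && _]andbC.
Qed.

Lemma add_edge_subrel : subrel H add_edge.
Proof. by move=> x y xy; rewrite /add_edge xy. Qed.

Lemma add_edge_subrel_sym (e : rel T) :
  symmetric e -> subrel H e -> e a w -> subrel add_edge e.
Proof.
move=> symE sHE aw x y /or3P[/sHE // | /andP[/eqP-> /eqP->] // | /andP[/eqP-> /eqP->]].
by rewrite symE.
Qed.

Lemma card_arcs_add_edge (e : rel T) : e a w -> ~~ H a w ->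
  (#|arcs e :\: arcs add_edge| < #|arcs e :\: arcs H|)%N.
Proof.
move=> e_aw H_aw; apply: proper_card; apply/properP; split.
  apply/subsetP => -[x y]; rewrite !inE /= => /andP[xy ->].
  by rewrite andbT; apply: contra xy; apply: add_edge_subrel.
exists (a, w); first by rewrite !inE /= H_aw e_aw.
by rewrite !inE /= /add_edge !eqxx orbT.
Qed.

Hypotheses (symH : symmetric H) (irrH : irreflexive H) (forestH : is_forest H).
Variable b : T.
Hypothesis ab : H a b.
Hypotheses (a_leaf : forall y, H a y -> y = b) (b_leaf : forall y, H b y -> y = a).
Hypotheses (w_a : w != a) (w_b : w != b).

Lemma add_edge_forest : is_forest add_edge.
Proof.
move=> s uniq_s size_s; apply/negP => cyc_s.
have b_a : b != a by apply: contraTneq ab => ->; rewrite irrH.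
have [b_w a_w] : b != w /\ a != w by rewrite !(eq_sym _ w).
have b_s : b \notin s.
  apply/negP => /(cycle_two_neighbours uniq_s size_s cyc_s)[y [z [_ _]]].
  rewrite /add_edge (negbTE b_a) (negbTE b_w) !andbF !orbF.
  move=> y_z /b_leaf y_a; rewrite symH => /b_leaf z_a.
  by rewrite y_a z_a eqxx in y_z.
have a_s : a \notin s.
  apply/negP => /(cycle_two_neighbours uniq_s size_s cyc_s)[y [z [y_s z_s]]].
  rewrite /add_edge eqxx (negbTE a_w) andbF orbF andbT [H _ a]symH.
  have nbr_a x : x \in s -> H a x || (x == w) -> x = w.
    by move=> x_s /orP[/a_leaf x_b | /eqP //]; rewrite x_b (negbTE b_s) in x_s.
  move=> y_z /(nbr_a y y_s) y_w /(nbr_a z z_s) z_w.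
  by rewrite y_w z_w eqxx in y_z.
have sub_s : {in [pred x | x \in s] &, subrel add_edge H}.
  move=> x y x_s y_s /or3P[// | /andP[/eqP x_a _] | /andP[_ /eqP y_a]].
    by rewrite -x_a x_s in a_s.
  by rewrite -y_a y_s in a_s.
move/negP: (forestH uniq_s size_s); apply; apply: (sub_in_cycle sub_s _ cyc_s).
exact/allP.
Qed.

End AddEdge.

Section IsolatedEdges.
Variable T : finType.

Definition isolated_edge (H : rel T) u v :=
  H u v && [forall w, (H u w || H v w) ==> (w == u) || (w == v)].

Lemma no_isolated_edgeP (H : rel T) :
  reflect (no_isolated_edge H) [forall u, forall v, ~~ isolated_edge H u v].
Proof.
apply: (iffP forallP) => [no_iso u v uv | noisoH u]; last first.
  apply/forallP => v; rewrite /isolated_edge negb_and -implybE; apply/implyP => uv.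
  have [w [w_u w_v uv_w]] := noisoH u v uv.
  rewrite negb_forall; apply/existsP; exists w.
  by rewrite negb_imply uv_w negb_or w_u w_v.
move/forallP/(_ v): (no_iso u); rewrite /isolated_edge uv negb_forall.
by case/existsP=> w; rewrite negb_imply negb_or => /andP[uv_w /andP[w_u w_v]]; exists w.
Qed.

Lemma isolated_edge_add_edge (e H : rel T) u v :
    symmetric e -> no_isolated_edge e ->
    symmetric H -> irreflexive H -> is_forest H -> subrel H e -> isolated_edge H u v ->
  exists H', [/\ symmetric H', is_forest H', subrel H H', subrel H' e
    & #|arcs e :\: arcs H'| < #|arcs e :\: arcs H|]%N.
Proof.
move=> symE noisoE symH irrH forestH sHE /andP[uv /forallP only_uv].
have u_leaf y : H u y -> y = v.
  move=> uy; have /implyP := only_uv y.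
  rewrite uy => /(_ isT) /orP[/eqP y_u | /eqP //].
  by rewrite y_u irrH in uy.
have v_leaf y : H v y -> y = u.
  move=> vy; have /implyP := only_uv y.
  rewrite vy orbT => /(_ isT) /orP[/eqP // | /eqP y_v].
  by rewrite y_v irrH in vy.
have [w [w_u w_v e_uvw]] := noisoE u v (sHE _ _ uv).
wlog e_uw : u v uv u_leaf v_leaf w_u w_v {e_uvw only_uv} / e u w.
  move=> W; case/orP: e_uvw => [e_uw | e_vw]; first exact: (W u v).
  by apply: (W v u) => //; rewrite symH.
have H_uw : ~~ H u w by apply: contra w_v => /u_leaf ->.
exists (add_edge H u w); split.
- exact: add_edge_sym.
- exact: (add_edge_forest symH irrH forestH uv u_leaf v_leaf w_u w_v).
- exact: add_edge_subrel.
- exact: add_edge_subrel_sym.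
- exact: card_arcs_add_edge.
Qed.

Lemma extend_forest_no_isolated_edge (e F : rel T) :
    symmetric e -> irreflexive e -> no_isolated_edge e ->
    symmetric F -> subrel F e -> is_forest F ->
  exists H, [/\ symmetric H, is_forest H, no_isolated_edge H, subrel F H & subrel H e].
Proof.
move=> symE irrE noisoE symF sFE forestF.
have [n] := ubnP #|arcs e :\: arcs F|; elim: n F symF sFE forestF => // n IHn.
move=> H symH sHE forestH lt_missing.
have irrH : irreflexive H by move=> x; apply/negP => /sHE; rewrite irrE.
have [noisoH | ] := boolP [forall u, forall v, ~~ isolated_edge H u v].
  by exists H; split=> //; apply/no_isolated_edgeP.
rewrite negb_forall => /existsP[u]; rewrite negb_forall => /existsP[v]; rewrite negbK.
case/(isolated_edge_add_edge symE noisoE symH irrH forestH sHE).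
move=> H' [symH' forestH' sHH' sH'E lt_H'].
have [|H'' [symH'' forestH'' noisoH'' sH'H'' sH''E]] := IHn H' symH' sH'E forestH'.
  exact: leq_trans lt_H' lt_missing.
by exists H''; split=> // x y /sHH' /sH'H''.
Qed.

End IsolatedEdges.

Section ModularLabellings.
Variable T : finType.

Definition wsumn (H : rel T) (C : {set T} -> nat) x :=
  (\sum_(y | H x y) C [set y; x])%N.

Definition nz_sum_distinguishing_mod (H : rel T) p (C : {set T} -> nat) :=
  (forall x y, H x y -> C [set x; y] != 0 %[mod p])%N /\
  (forall x y, H x y -> wsumn H C x != wsumn H C y %[mod p])%N.

Lemma Fp_nz_sum_distinguishing_mod p (H : rel T) (c : {set T} -> 'F_p) :
  prime p -> nz_sum_distinguishing H c -> nz_sum_distinguishing_mod H p (fun S => c S).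
Proof.
move=> p_pr [c_nz c_sum].
have eq_natr m n : ((m%:R : 'F_p) == n%:R) = (m == n %[mod p])%N.
  by rewrite -val_eqE /= !val_Fp_nat.
have wsum_natr x : (wsumn H (fun S => c S) x)%:R = wsum H c x.
  by rewrite natr_sum; apply: eq_bigr => y _; rewrite natr_Zp.
by split=> x y xy; rewrite -eq_natr ?wsum_natr ?natr_Zp ?c_nz ?c_sum.
Qed.

Lemma forest_nz_sum_distinguishing_mod p (H : rel T) :
    prime p -> (3 < p)%N ->
    symmetric H -> irreflexive H -> is_forest H -> no_isolated_edge H ->
  exists C, nz_sum_distinguishing_mod H p C.
Proof.
move=> p_pr p_gt3 symH irrH forestH noisoH.
have [c c_dist] : exists c : {set T} -> 'F_p, nz_sum_distinguishing H c.
  apply: forest_nz_sum_distinguishing => //; first by rewrite card_Fp.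
  by apply/eqP => /(congr1 (@nat_of_ord _)); rewrite val_Fp_nat // modn_small // ltnW.
by exists (fun S => c S); apply: Fp_nz_sum_distinguishing_mod.
Qed.

Definition edge_of (H : rel T) (S : {set T}) :=
  [exists x, exists y, (S == [set x; y]) && H x y].

Lemma edge_of_set2 (H : rel T) x y : symmetric H -> edge_of H [set x; y] = H x y.
Proof.
move=> symH; apply/existsP/idP => [[x' /existsP[y' /andP[/eqP eq_xy xy']]] | xy].
  by case: (set2_inj eq_xy) => -[-> ->]; rewrite // symH.
by exists x; apply/existsP; exists y; rewrite eqxx.
Qed.

Lemma extend_forest_nz_sum_distinguishing_mod (e F : rel T) p :
    prime p -> (3 < p)%N -> symmetric e -> irreflexive e -> no_isolated_edge e ->
    symmetric F -> subrel F e -> is_forest F ->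
  exists H C,
    [/\ symmetric H, subrel F H, subrel H e & nz_sum_distinguishing_mod H p C].
Proof.
move=> p_pr p_gt3 symE irrE noisoE symF sFE forestF.
have [H [symH forestH noisoH sFH sHE]] :=
  extend_forest_no_isolated_edge symE irrE noisoE symF sFE forestF.
have irrH : irreflexive H by move=> x; apply/negP => /sHE; rewrite irrE.
have [C C_dist] := forest_nz_sum_distinguishing_mod p_pr p_gt3 symH irrH forestH noisoH.
by exists H, C.
Qed.

Lemma nz_sum_distinguishing_combine (Z : zmodType) (e : rel T) a
    (P : 'I_a -> nat) (X : 'I_a -> Z) (F : 'I_a -> rel T) :
    (forall i k, (X i *+ k == 0) = (P i %| k)%N) ->
    (forall i j, i != j -> coprime (P i) (P j)) ->
    (forall i, exists H C, [/\ symmetric H, subrel (F i) H, subrel H e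
                            & nz_sum_distinguishing_mod H (P i) C]) ->
    (forall x y, e x y -> exists i, F i x y) ->
  exists f : {set T} -> Z, nz_sum_distinguishing e f.
Proof.
move=> orderX coprimeP /fin_all_exists[H /fin_all_exists[C HC]] cover.
pose g i S := if edge_of (H i) S then C i S else 0%N.
have g_set2 i x y : g i [set x; y] = if H i x y then C i [set x; y] else 0%N.
  by have [symH _ _ _] := HC i; rewrite /g edge_of_set2.
pose f S := \sum_i X i *+ g i S.
have wsum_f x : wsum e f x = \sum_i X i *+ wsumn (H i) (C i) x.
  rewrite /wsum /f exchange_big /=; apply: eq_bigr => i _; rewrite sumrMnr.
  have [symH _ sHE _] := HC i; congr (_ *+ _).
  rewrite /wsumn (eq_bigr _ (fun y _ => g_set2 i y x)) -big_mkcondr.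
  by apply: eq_bigl => y; rewrite [H i y x]symH andb_idl // => /sHE.
exists f; split=> x y /cover[i Fxy]; have [_ sFH _ [C_nz C_sum]] := HC i.
  apply/eqP => f_xy.
  have /(sum_mulrn_inj_mod orderX coprimeP)/(_ i) : f [set x; y] = \sum_j X j *+ 0.
    by rewrite f_xy big1 // => j _; rewrite mulr0n.
  by rewrite g_set2 sFH // => /eqP; apply/negP/C_nz/sFH.
apply/eqP; rewrite !wsum_f => /(sum_mulrn_inj_mod orderX coprimeP)/(_ i)/eqP.
exact/negP/C_sum/sFH.
Qed.

End ModularLabellings.

Lemma coprime_nth_primes (ps : seq nat) i j :
    uniq ps -> all prime ps -> (i < size ps)%N -> (j < size ps)%N -> i != j ->
  coprime (nth 0%N ps i) (nth 0%N ps j).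
Proof.
move=> uniq_ps /allP prime_ps lt_i lt_j ij.
rewrite prime_coprime ?prime_ps ?mem_nth // dvdn_prime2 ?prime_ps ?mem_nth //.
by rewrite nth_uniq.
Qed.

Theorem corollary7 (a : nat) (T : finType) (e : rel T) (ps : seq nat) :
  (0 < a)%N -> simple_graph e -> arboricity_le e a -> no_isolated_edge e ->
  first_primes_gt3 a ps ->
  exists k : nat, [/\ (0 < k)%N, (k <= \prod_(p <- ps) p)%N & group_sum_good e k].
Proof.
move=> _ [symE irrE] [col forest_col] noisoE [size_ps sorted_ps primes_ps _].
pose P (i : 'I_a) := nth 0%N ps i.
have P_ps i : P i \in ps by rewrite mem_nth ?size_ps.
have P_prime i : prime (P i) /\ (3 < P i)%N by apply/andP/(allP primes_ps).
have coprimeP i j : i != j -> coprime (P i) (P j).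
  move=> ij; apply: coprime_nth_primes ij; rewrite ?size_ps ?ltn_ord //.
    exact: sorted_uniq ltn_trans ltnn _ sorted_ps.
  by apply/allP => p /(allP primes_ps)/andP[].
exists (\prod_(p <- ps) p)%N; split=> //.
  by rewrite big_seq prodn_cond_gt0 // => p /(allP primes_ps)/andP[/prime_gt0].
move=> Z card_Z.
have P_dvd i : (P i %| #|Z|)%N by rewrite card_Z (big_rem _ (P_ps i)) dvdn_mulr.
have [X orderX] := fin_all_exists (fun i => exists_add_order (P_prime i).1 (P_dvd i)).
apply: (nz_sum_distinguishing_combine orderX coprimeP
  (F := fun i => [rel x y | e x y && (col [set x; y] == i)])).
- move=> i; have [p_pr p_gt3] := P_prime i.
  apply: extend_forest_nz_sum_distinguishing_mod => //; last by move=> x y /andP[].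
  by move=> x y; rewrite /= symE setUC.
- by move=> x y xy; exists (col [set x; y]); rewrite /= xy eqxx.
Qed.
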